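(* For every integer $k\ge 2$, the Zielonka graph $\vec Z_k$ is splitable: there is an oriented graph $\vec T$ on $k\cdot 2^{k-2}$ vertices such that $\vec Z_k$ is isomorphic to the anti-twinned graph $R(\vec T)$.
   Context: For $k\ge 1$ the Zielonka graph $\vec Z_k$ has vertex set $S_1\cup\dots\cup S_k$, where $S_i$ is the set of $k$-tuples $x=(x^1,\dots,x^k)$ with $x^i=*$ and $x^j\in\{0,1\}$ for $j\neq i$ (so $\vec Z_k$ has $k\cdot 2^{k-1}$ vertices). For $x\in S_i$ and $y\in S_j$ with $i\neq j$, there is an arc $xy$ if and only if either ($i<j$ and $x^j=y^i$) or ($i>j$ and $x^j\neq y^i$); there are no other arcs. Given an oriented graph $\vec T$ with vertex set $\{v_1,\dots,v_n\}$, its anti-twinned graph $R(\vec T)$ is the oriented graph with vertex set $\{v_1,\dots,v_n\}\cup\{v_1',\dots,v_n'\}$ and arc set $\{v_iv_j,\ v_i'v_j',\ v_jv_i',\ v_j'v_i : v_iv_j\text{ an arc of }\vec T\}$. An oriented graph is splitable if it is isomorphic to $R(\vec T)$ for some oriented graph $\vec T$. *)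

From mathcomp Require Import all_boot.
Set Implicit Arguments. Unset Strict Implicit. Unset Printing Implicit Defensive.

(* A k-tuple over {0,1,*}: coordinate j is [Some b] for b in {0,1}, [None] for *. *)
Definition ztuple (k : nat) := {ffun 'I_k -> option bool}.

Definition zvalid (k : nat) (x : ztuple k) : bool :=
  #|[pred j | x j == None]| == 1.

Definition zvert (k : nat) := {x : ztuple k | zvalid x}.

Definition zarc (k : nat) (x y : zvert k) : bool :=
  [exists i : 'I_k, exists j : 'I_k,
     [&& (val x i == None), (val y j == None), (i != j) &
      (((i < j)%N && (val x j == val y i)) || ((j < i)%N && (val x j != val y i)))]].

Definition oriented (V : finType) (e : rel V) : Prop :=
  (forall v, ~~ e v v) /\ (forall u v, e u v -> ~~ e v u).

(* Anti-twinned graph R(T): vertices inl v_i (= v_i) and inr v_i (= v_i');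
   arcs v_i v_j, v_i' v_j', v_j v_i', v_j' v_i for each arc v_i v_j of T. *)
Definition antitwin (V : finType) (e : rel V) : rel (V + V) :=
  fun a b =>
    match a, b with
    | inl i, inl j => e i j
    | inr i, inr j => e i j
    | inl j, inr i => e i j
    | inr j, inl i => e i j
    end.

From mathcomp Require Import all_boot zify.
Set Implicit Arguments. Unset Strict Implicit. Unset Printing Implicit Defensive.

(* Flipping every bit of a vertex of Z_k is an involution s with
   x -> s y an arc iff y -> x is one.  Any oriented graph with such an
   involution, together with a half H of its vertices exchanged with its
   complement by s, is R(T) for T its restriction to H: the vertices of H
   play the v_i and their images under s the v_i'.  For Z_k one may take for
   H the vertices whose first coordinate other than * is 0. *)

Section AntitwinCriterion.
Variables (V : finType) (e : rel V) (s : V -> V) (half : pred V) (n : nat).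
Hypotheses (sK : involutive s) (e_s : forall x y, e x (s y) = e y x)
  (half_s : forall x, half (s x) = ~~ half x) (e_oriented : oriented e)
  (card_V : #|V| = n + n).

Lemma e_ss x y : e (s x) (s y) = e x y.
Proof. by rewrite e_s e_s. Qed.

Lemma e_sl x y : e (s x) y = e y x.
Proof. by rewrite -{1}(sK y) e_ss e_s. Qed.

Lemma card_half : #|half| = n.
Proof.
have card_predC : #|[predC half]| = #|half|.
  rewrite -(card_image (inv_inj sK)); apply: eq_card => x; rewrite inE.
  apply/idP/imageP => [nhx | [y hy ->]].
    by exists (s x); rewrite ?sK // unfold_in half_s.
  by move: hy; rewrite !unfold_in half_s => ->.
by move: card_V; rewrite -(cardC half) card_predC; lia.
Qed.

Definition half_enum (i : 'I_n) : V := enum_val (cast_ord (esym card_half) i).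

Lemma half_enumP i : half (half_enum i).
Proof. exact: (enum_valP (A := half)). Qed.

Lemma half_enum_inj : injective half_enum.
Proof. by move=> i j /enum_val_inj /cast_ord_inj. Qed.

Definition antitwin_embed (u : 'I_n + 'I_n) : V :=
  match u with inl i => half_enum i | inr i => s (half_enum i) end.

Lemma antitwin_embed_bij : bijective antitwin_embed.
Proof.
apply: inj_card_bij; last by rewrite card_sum card_ord card_V.
have half_enum_s i j : half_enum i <> s (half_enum j).
  by move=> eij; move: (half_enumP i); rewrite eij half_s half_enumP.
case=> i [] j /= eij.
- by rewrite (half_enum_inj eij).
- by case: (half_enum_s _ _ eij).
- by case: (half_enum_s _ _ (esym eij)).
- by rewrite (half_enum_inj (inv_inj sK eij)).
Qed.

Definition half_rel (i j : 'I_n) : bool := e (half_enum i) (half_enum j).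

Lemma half_rel_oriented : oriented half_rel.
Proof. by case: e_oriented => irr asym; split=> [i | i j]; [exact: irr | exact: asym]. Qed.

Lemma antitwin_embedE u v :
  e (antitwin_embed u) (antitwin_embed v) = antitwin half_rel u v.
Proof. by case: u => i; case: v => j; rewrite /= ?e_ss ?e_s ?e_sl. Qed.

Lemma antitwin_of_involution :
  exists T : rel 'I_n, oriented T /\
    exists f : V -> 'I_n + 'I_n, bijective f /\
      forall x y, e x y = antitwin T (f x) (f y).
Proof.
exists half_rel; split; first exact: half_rel_oriented.
have [f embedK fK] := antitwin_embed_bij.
exists f; split; first by exists antitwin_embed.
by move=> x y; rewrite -antitwin_embedE !fK.
Qed.

End AntitwinCriterion.

Definition zflip_tuple k (x : ztuple k) : ztuple k := [ffun j => omap negb (x j)].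

Lemma zvalid_flip k (x : ztuple k) : zvalid x -> zvalid (zflip_tuple x).
Proof.
by rewrite /zvalid => /eqP <-; apply/eqP/eq_card => j; rewrite !inE ffunE; case: (x j).
Qed.

Definition zflip k (x : zvert k) : zvert k := exist (fun y => zvalid y) _ (zvalid_flip (valP x)).

Lemma zflipE k (x : zvert k) j : val (zflip x) j = omap negb (val x j).
Proof. by rewrite ffunE. Qed.

Lemma zflipK k : involutive (@zflip k).
Proof. by move=> x; apply/val_inj/ffunP => j; rewrite !zflipE; case: (val x j) => [[]|]. Qed.

Definition zbit k (x : zvert k) (j : 'I_k) : bool := val x j == Some true.

Section ZielonkaStar.
Variable m : nat.
Local Notation k := m.+1.

Definition zstar (x : zvert k) : 'I_k := odflt ord0 [pick j | val x j == None].

Lemma zstarE (x : zvert k) j : (val x j == None) = (j == zstar x).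
Proof.
have /card1P [a xa] := valP x.
have none_a y : (val x y == None) = (y == a) by have := xa y; rewrite !inE.
have -> : zstar x = a.
  by rewrite /zstar; case: pickP => [b | /(_ a)] /=; rewrite none_a ?eqxx // => /eqP.
exact: none_a.
Qed.

Lemma zvert_star (x : zvert k) : val x (zstar x) = None.
Proof. by apply/eqP; rewrite zstarE. Qed.

Lemma zvert_bit (x : zvert k) j : j != zstar x -> val x j = Some (zbit x j).
Proof. by rewrite -zstarE /zbit; case: (val x j) => [[]|]. Qed.

Lemma zstar_flip (x : zvert k) : zstar (zflip x) = zstar x.
Proof. by apply/eqP; rewrite eq_sym -zstarE zflipE zvert_star. Qed.

Lemma zbit_flip (x : zvert k) j : j != zstar x -> zbit (zflip x) j = ~~ zbit x j.
Proof. by move=> /zvert_bit xj; rewrite /zbit zflipE xj; case: zbit. Qed.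

Lemma zarcE (x y : zvert k) :
  zarc x y = (zstar x != zstar y) &&
             ((zstar x < zstar y)%N == (zbit x (zstar y) == zbit y (zstar x))).
Proof.
apply/existsP/andP => [[i /existsP [j]] | [ij arc]].
  rewrite !zstarE => /and4P [/eqP -> /eqP -> ij arc]; split=> //.
  have ji : zstar y != zstar x by rewrite eq_sym.
  move: arc; rewrite (zvert_bit ij) (zvert_bit ji).
  by case: (zbit x _); case: (zbit y _); case: ltngtP.
exists (zstar x); apply/existsP; exists (zstar y).
have ji : zstar y != zstar x by rewrite eq_sym.
rewrite !zvert_star eqxx ij /= (zvert_bit ij) (zvert_bit ji).
by move: arc ij; case: (zbit x _); case: (zbit y _);
  case: ltngtP => [_|_|/val_inj->]; rewrite ?eqxx.
Qed.

Lemma zarc_oriented : oriented (@zarc k).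
Proof.
split=> [x | x y]; rewrite !zarcE; first by rewrite eqxx.
rewrite [zstar y == _]eq_sym [zbit y _ == _]eq_sym.
by case: ltngtP => [_|_|/val_inj->]; case: (zbit x _ == _); rewrite ?eqxx ?andbF ?andbT.
Qed.

Lemma zarc_flipr (x y : zvert k) : zarc x (zflip y) = zarc y x.
Proof.
rewrite !zarcE zstar_flip [zstar y == _]eq_sym.
have [ij | //] := boolP (zstar x != zstar y).
rewrite (zbit_flip ij) /=.
by case: ltngtP ij => [_|_|/val_inj->]; rewrite ?eqxx //; case: zbit; case: zbit.
Qed.

Definition zvert_of_star (p : 'I_k * {ffun 'I_m -> bool}) : ztuple k :=
  [ffun j => omap p.2 (unlift p.1 j)].

Lemma zvalid_of_star p : zvalid (zvert_of_star p).
Proof.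
apply/card1P; exists p.1 => j; rewrite !inE ffunE.
by case: unliftP => [j' -> | ->]; rewrite ?eqxx // [RHS]eq_sym (negbTE (neq_lift _ _)).
Qed.

Definition zdecode p : zvert k := exist (fun y => zvalid y) _ (zvalid_of_star p).

Definition zencode (x : zvert k) : 'I_k * {ffun 'I_m -> bool} :=
  (zstar x, [ffun j => zbit x (lift (zstar x) j)]).

Lemma zencodeK : cancel zencode zdecode.
Proof.
move=> x; apply/val_inj/ffunP => j; rewrite ffunE /=.
case: unliftP => [j' -> | ->]; last exact/esym/zvert_star.
by rewrite /= ffunE zvert_bit // eq_sym neq_lift.
Qed.

Lemma zdecodeK : cancel zdecode zencode.
Proof.
move=> [i g]; have star_i : zstar (zdecode (i, g)) = i.
  by apply/esym/eqP; rewrite -zstarE ffunE unlift_none.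
rewrite /zencode star_i; congr pair; apply/ffunP => j.
by rewrite !ffunE /zbit ffunE liftK /=; case: (g j).
Qed.

Lemma card_zvert : #|{: zvert k}| = k * 2 ^ m.
Proof.
rewrite (bij_eq_card (Bijective zencodeK zdecodeK)).
by rewrite card_prod card_ord card_ffun card_bool card_ord.
Qed.

End ZielonkaStar.

Definition zhalf m (x : zvert m.+2) : bool := ~~ zbit x (lift (zstar x) ord0).

Lemma zhalf_flip m (x : zvert m.+2) : zhalf (zflip x) = ~~ zhalf x.
Proof. by rewrite /zhalf zstar_flip zbit_flip // eq_sym neq_lift. Qed.

Theorem mainTheorem7 (k : nat) (hk : (2 <= k)%N) :
  exists T : rel 'I_(k * 2 ^ (k - 2)),
    oriented T /\
    exists f : zvert k -> 'I_(k * 2 ^ (k - 2)) + 'I_(k * 2 ^ (k - 2)),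
      bijective f /\ forall x y, zarc x y = antitwin T (f x) (f y).
Proof.
case: k hk => [|[|m]] // _.
apply: (antitwin_of_involution (@zflipK _) (@zarc_flipr _) (@zhalf_flip m)).
- exact: zarc_oriented.
- by rewrite card_zvert expnS !subSS subn0 mulnCA mul2n addnn.
Qed.
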